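(* Let $(X_1,X_2,X_3)$ be nonnegative random variables with a common marginal survival function $\bar F$ and Farlie–Gumbel–Morgenstern survival copula $\hat C(u_1,u_2,u_3)=u_1u_2u_3[1+\theta(1-u_1)(1-u_2)(1-u_3)]$, $-1\le\theta\le1$. Let $t>0$ with $0<k:=\bar F(t)<1$, and define $\mathbf{X}_t=(X_1-t,X_2-t\mid X_1>t,X_2>t)$, $\mathbf{X}^{(3)}_t=(X_1-t,X_2-t\mid X_1>t,X_2>t,X_3\le t)$, $\mathbf{X}^*_t=(X_1-t,X_2-t\mid X_1>t,X_2>t,X_3>t)$. Then the joint survival functions of these three vectors are $\hat D(\bar F_t(x_1),\bar F_t(x_2))$ with $\bar F_t(x)=\bar F(t+x)/\bar F(t)$ and respective dual distortions $\hat D_t(u_1,u_2)=u_1u_2$, $\hat D^{(3)}_t(u_1,u_2)=u_1u_2\dfrac{1-\theta k(1-ku_1)(1-ku_2)}{1-\theta k(1-k)^2}$, $\hat D^{*}_t(u_1,u_2)=u_1u_2\dfrac{1+\theta(1-ku_1)(1-ku_2)(1-k)}{1+\theta(1-k)^3}$. Moreover $\hat D^*_t\le\hat D_t\le\hat D^{(3)}_t$ when $\theta\le0$ and $\hat D^*_t\ge\hat D_t\ge\hat D^{(3)}_t$ when $\theta\ge0$; consequently $\mathbf{X}^*_t\le_{uo}\mathbf{X}_t\le_{uo}\mathbf{X}^{(3)}_t$ for $\theta\le0$, and the reverse orderings hold for $\theta\ge0$.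
   Context: Upper orthant order: $\mathbf{X}\le_{uo}\mathbf{Y}$ iff $\Pr(\mathbf{X}>\mathbf{x})\le\Pr(\mathbf{Y}>\mathbf{x})$ for all $\mathbf{x}$ (componentwise). *)

From HB Require Import structures.
From mathcomp Require Import all_boot all_order all_algebra.
From mathcomp Require Import all_classical all_reals all_analysis.
Set Implicit Arguments. Unset Strict Implicit. Unset Printing Implicit Defensive.
Import Order.TTheory GRing.Theory Num.Theory.
Local Open Scope classical_set_scope.
Local Open Scope ring_scope.

Definition FGM3 (R : realType) (theta u1 u2 u3 : R) : R :=
  u1 * u2 * u3 * (1 + theta * (1 - u1) * (1 - u2) * (1 - u3)).

Definition condP d (T : measurableType d) (R : realType) (P : probability T R)
  (A B : set T) : R := fine (P (A `&` B)) / fine (P B).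

Definition cond_surv2 d (T : measurableType d) (R : realType) (P : probability T R)
  (Y1 Y2 : T -> R) (B : set T) (x1 x2 : R) : R :=
  condP P [set w | x1 < Y1 w /\ x2 < Y2 w] B.

Definition uo_le2 d (T : measurableType d) (R : realType) (P : probability T R)
  (Y1 Y2 : T -> R) (B : set T) (Z1 Z2 : T -> R) (C : set T) : Prop :=
  forall x1 x2 : R, cond_surv2 P Y1 Y2 B x1 x2 <= cond_surv2 P Z1 Z2 C x1 x2.

Definition Dt (R : realType) (u1 u2 : R) : R := u1 * u2.
Definition D3t (R : realType) (theta k u1 u2 : R) : R :=
  u1 * u2 * ((1 - theta * k * (1 - k * u1) * (1 - k * u2))
             / (1 - theta * k * (1 - k) ^+ 2)).
Definition Dstart (R : realType) (theta k u1 u2 : R) : R :=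
  u1 * u2 * ((1 + theta * (1 - k * u1) * (1 - k * u2) * (1 - k))
             / (1 + theta * (1 - k) ^+ 3)).

(* The three conditional joint survival functions are ratios of values of the
   copula FGM3 at the marginal survival values: for x1, x2 >= 0,
     P(X1 > t+x1, X2 > t+x2 | B)  with  B in {Bt, B3, Bs}
   is FGM3(.,.,1)/FGM3(k,k,1), a difference of two such terms for B3
   (P(X3 <= t) = P(X3 > -1) - P(X3 > t)), and FGM3(.,.,k)/FGM3(k,k,k) for Bs.
   A field computation turns each ratio into the announced dual distortion
   evaluated at Fbar(t+x)/Fbar(t).

   The orderings come from the gap identities
     Dstart - Dt = theta * c   and   D3t - Dt = -(theta * c')   with c, c' >= 0,
   both resting on (1-k)^2 <= (1-k u1)(1-k u2) for u1, u2 in [0,1].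
   Finally, conditional survival functions of vectors that are positive on the
   conditioning event do not change when negative arguments are replaced by 0,
   so the upper orthant order only needs to be checked at nonnegative points,
   where it is the ordering of the distortions. *)

From HB Require Import structures.
From mathcomp Require Import all_boot all_order all_algebra.
From mathcomp Require Import all_classical all_reals all_analysis.
From mathcomp Require Import ring lra.
Set Implicit Arguments. Unset Strict Implicit. Unset Printing Implicit Defensive.
Import Order.TTheory GRing.Theory Num.Theory.
Local Open Scope classical_set_scope.
Local Open Scope ring_scope.

(* The normalising constants of Dstart and D3t are positive, since
   |theta| <= 1 and both (1-k)^3 and k (1-k)^2 lie in [0,1). *)
Lemma Dstar_den_gt0 (R : realType) (theta k : R) :
  -1 <= theta <= 1 -> 0 < k < 1 -> 0 < 1 + theta * (1 - k) ^+ 3.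
Proof.
move=> /andP[th_ge th_le] /andP[k_gt0 k_lt1].
have c0 : 0 <= 1 - k by lra.
have c3lt : (1 - k) ^+ 3 < 1 by rewrite exprn_ilt1 //; lra.
have c3ge : 0 <= (1 - k) ^+ 3 by rewrite exprn_ge0.
have : 0 <= (theta + 1) * (1 - k) ^+ 3 by rewrite mulr_ge0 //; lra.
lra.
Qed.

Lemma D3_den_gt0 (R : realType) (theta k : R) :
  -1 <= theta <= 1 -> 0 < k < 1 -> 0 < 1 - theta * k * (1 - k) ^+ 2.
Proof.
move=> /andP[th_ge th_le] /andP[k_gt0 k_lt1].
have c0 : 0 <= 1 - k by lra.
have c2lt : (1 - k) ^+ 2 < 1 by rewrite exprn_ilt1 //; lra.
have c2ge : 0 <= (1 - k) ^+ 2 by rewrite exprn_ge0.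
have kc2 : k * (1 - k) ^+ 2 < 1 by nra.
have kc2ge : 0 <= k * (1 - k) ^+ 2 by rewrite mulr_ge0 // ltW.
have : 0 <= (1 - theta) * (k * (1 - k) ^+ 2) by rewrite mulr_ge0 //; lra.
rewrite -mulrA; lra.
Qed.

Lemma shifted_prod_ge (R : realType) (k u1 u2 : R) :
  0 <= k <= 1 -> 0 <= u1 <= 1 -> 0 <= u2 <= 1 ->
  (1 - k) ^+ 2 <= (1 - k * u1) * (1 - k * u2).
Proof.
move=> /andP[? ?] /andP[? ?] /andP[? ?].
rewrite expr2 ler_pM //; nra.
Qed.

Lemma Dstart_sub_Dt (R : realType) (theta k u1 u2 : R) :
  -1 <= theta <= 1 -> 0 < k < 1 -> 0 <= u1 <= 1 -> 0 <= u2 <= 1 ->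
  exists2 c, 0 <= c & Dstart theta k u1 u2 - Dt u1 u2 = theta * c.
Proof.
move=> th01 k01 u1_01 u2_01.
have den_gt0 := Dstar_den_gt0 th01 k01.
have k_01 : 0 <= k <= 1 by case/andP: k01 => ? ?; apply/andP; split; lra.
have gap_ge0 := shifted_prod_ge k_01 u1_01 u2_01.
exists (u1 * u2 * (1 - k) * ((1 - k * u1) * (1 - k * u2) - (1 - k) ^+ 2)
        / (1 + theta * (1 - k) ^+ 3)).
  case/andP: k01 u1_01 u2_01 => k0 k1 /andP[u10 _] /andP[u20 _].
  by rewrite divr_ge0 ?(ltW den_gt0) // !mulr_ge0 ?subr_ge0 //; lra.
rewrite /Dstart /Dt; field; exact: lt0r_neq0.
Qed.

Lemma D3t_sub_Dt (R : realType) (theta k u1 u2 : R) :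
  -1 <= theta <= 1 -> 0 < k < 1 -> 0 <= u1 <= 1 -> 0 <= u2 <= 1 ->
  exists2 c, 0 <= c & D3t theta k u1 u2 - Dt u1 u2 = - (theta * c).
Proof.
move=> th01 k01 u1_01 u2_01.
have den_gt0 := D3_den_gt0 th01 k01.
have k_01 : 0 <= k <= 1 by case/andP: k01 => ? ?; apply/andP; split; lra.
have gap_ge0 := shifted_prod_ge k_01 u1_01 u2_01.
exists (u1 * u2 * k * ((1 - k * u1) * (1 - k * u2) - (1 - k) ^+ 2)
        / (1 - theta * k * (1 - k) ^+ 2)).
  case/andP: k01 u1_01 u2_01 => k0 k1 /andP[u10 _] /andP[u20 _].
  by rewrite divr_ge0 ?(ltW den_gt0) // !mulr_ge0 ?subr_ge0 // ltW.
rewrite /D3t /Dt; field; exact: lt0r_neq0.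
Qed.

Lemma distortion_orders (R : realType) (theta k u1 u2 : R) :
  -1 <= theta <= 1 -> 0 < k < 1 -> 0 <= u1 <= 1 -> 0 <= u2 <= 1 ->
  (theta <= 0 -> Dstart theta k u1 u2 <= Dt u1 u2 /\ Dt u1 u2 <= D3t theta k u1 u2) /\
  (0 <= theta -> Dt u1 u2 <= Dstart theta k u1 u2 /\ D3t theta k u1 u2 <= Dt u1 u2).
Proof.
move=> th01 k01 u1_01 u2_01.
have [cs cs_ge0 Es] := Dstart_sub_Dt th01 k01 u1_01 u2_01.
have [c3 c3_ge0 E3] := D3t_sub_Dt th01 k01 u1_01 u2_01.
by split=> th_sgn; split; nra.
Qed.

Lemma FGM3_ratio_Dt (R : realType) (theta a b k : R) : k != 0 ->
  FGM3 theta a b 1 / FGM3 theta k k 1 = Dt (a / k) (b / k).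
Proof. by move=> k0; rewrite /FGM3 /Dt; field; rewrite k0. Qed.

Lemma FGM3_ratio_Dstart (R : realType) (theta a b k : R) :
  k != 0 -> 1 + theta * (1 - k) ^+ 3 != 0 ->
  FGM3 theta a b k / FGM3 theta k k k = Dstart theta k (a / k) (b / k).
Proof.
by move=> k0 den0; rewrite /FGM3 /Dstart; field; rewrite k0 /= -?mulrA ?den0.
Qed.

Lemma FGM3_ratio_D3t (R : realType) (theta a b k : R) :
  k != 0 -> 1 - k != 0 -> 1 - theta * k * (1 - k) ^+ 2 != 0 ->
  (FGM3 theta a b 1 - FGM3 theta a b k) / (FGM3 theta k k 1 - FGM3 theta k k k)
  = D3t theta k (a / k) (b / k).
Proof.
move=> k0 k1 den0; rewrite /FGM3 /D3t; field; rewrite den0 k0 /=.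
have -> : k * k - k * k * k * (1 + theta * (1 - k) * (1 - k) * (1 - k)) =
  k * k * (1 - k) * (1 - theta * k * (1 - k) ^+ 2) by ring.
by rewrite !mulf_neq0.
Qed.

Section ConditionalSurvival.
Context d (T : measurableType d) (R : realType) (P : probability T R).

Lemma cond_surv2_clip (Y1 Y2 : T -> R) (B : set T) (x1 x2 : R) :
  (forall w, B w -> 0 < Y1 w /\ 0 < Y2 w) ->
  cond_surv2 P Y1 Y2 B x1 x2
  = cond_surv2 P Y1 Y2 B (Num.max x1 0) (Num.max x2 0).
Proof.
move=> BY; rewrite /cond_surv2 /condP; congr (fine (P _) / _).
apply/seteqP; split=> w /= [[h1 h2] Bw]; have [Y1w Y2w] := BY w Bw;
  split=> //; rewrite ?gt_max in h1 h2 *.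
  by split; apply/andP.
by case/andP: h1; case/andP: h2.
Qed.

Lemma uo_le2_of_nonneg (Y1 Y2 : T -> R) (B : set T) (Z1 Z2 : T -> R) (C : set T) :
  (forall w, B w -> 0 < Y1 w /\ 0 < Y2 w) ->
  (forall w, C w -> 0 < Z1 w /\ 0 < Z2 w) ->
  (forall x1 x2, 0 <= x1 -> 0 <= x2 ->
     cond_surv2 P Y1 Y2 B x1 x2 <= cond_surv2 P Z1 Z2 C x1 x2) ->
  uo_le2 P Y1 Y2 B Z1 Z2 C.
Proof.
move=> BY CZ le_nonneg x1 x2.
by rewrite (cond_surv2_clip x1 x2 BY) (cond_surv2_clip x1 x2 CZ) le_nonneg ?le_max ?lexx ?orbT.
Qed.

Lemma measurable_RV_gt (X : {RV P >-> R}) (a : R) : measurable [set w | a < X w].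
Proof.
have := measurable_funPTI X (measurable_itv `]a, +oo[).
by rewrite /preimage /=; under eq_set do rewrite in_itv /= andbT.
Qed.

End ConditionalSurvival.

Section FGMModel.
Context d (T : measurableType d) (R : realType) (P : probability T R).
Variables (X1 X2 X3 : {RV P >-> R}) (Fbar : R -> R) (theta t : R).
Hypothesis X3_ge0 : forall w, 0 <= X3 w.
Hypothesis surv1 : forall x, fine (P [set w | x < X1 w]) = Fbar x.
Hypothesis surv3 : forall x, fine (P [set w | x < X3 w]) = Fbar x.
Hypothesis fgm : forall x1 x2 x3,
  fine (P [set w | x1 < X1 w /\ x2 < X2 w /\ x3 < X3 w])
  = FGM3 theta (Fbar x1) (Fbar x2) (Fbar x3).

(* The event {X3 > -1} is sure, so Fbar(-1) = 1 and FGM3(.,.,1) gives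
   bivariate survival probabilities. *)
Lemma X3_gt_neg1 (w : T) : -1 < X3 w.
Proof. exact: lt_le_trans (ltrN10 R) (X3_ge0 w). Qed.

Lemma Fbar_neg1 : Fbar (-1) = 1.
Proof.
rewrite -surv3; have -> : [set w | -1 < X3 w] = setT.
  by apply/seteqP; split=> w // _; exact: X3_gt_neg1.
by rewrite probability_setT.
Qed.

Lemma Fbar_bounds (x : R) : 0 <= Fbar x <= 1.
Proof.
have mX := measurable_RV_gt X1 x.
rewrite -surv1 fine_ge0 ?measure_ge0 //=.
by rewrite -[1%R]/(fine 1%E) fine_le ?fin_num_measure ?probability_le1.
Qed.

Lemma Fbar_nonincr (x y : R) : x <= y -> Fbar y <= Fbar x.
Proof.
move=> xy; have mXx := measurable_RV_gt X1 x; have mXy := measurable_RV_gt X1 y.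
rewrite -!surv1 fine_le ?fin_num_measure //.
by apply: le_measure; rewrite ?inE // => w /=; apply: le_lt_trans.
Qed.

Lemma tail3_measurable (a b c : R) :
  measurable [set w | a < X1 w /\ b < X2 w /\ c < X3 w].
Proof.
apply: (measurableI _ _ (measurable_RV_gt X1 a)).
exact: measurableI (measurable_RV_gt X2 b) (measurable_RV_gt X3 c).
Qed.

Lemma tail2_as_tail3 (a b : R) :
  [set w | a < X1 w /\ b < X2 w] = [set w | a < X1 w /\ b < X2 w /\ -1 < X3 w].
Proof.
apply/seteqP; split=> w /= [h1 h2]; last by case: h2.
by do 2!split=> //; exact: X3_gt_neg1.
Qed.

(* P(X1 > a, X2 > b, X3 <= c) by complementation within {X3 > -1}. *)
Lemma prob_X3_le (a b c : R) :
  fine (P [set w | a < X1 w /\ b < X2 w /\ X3 w <= c])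
  = FGM3 theta (Fbar a) (Fbar b) 1 - FGM3 theta (Fbar a) (Fbar b) (Fbar c).
Proof.
have -> : [set w | a < X1 w /\ b < X2 w /\ X3 w <= c] =
    [set w | a < X1 w /\ b < X2 w /\ -1 < X3 w]
    `\` [set w | a < X1 w /\ b < X2 w /\ c < X3 w].
  apply/seteqP; split=> w /=.
    move=> [h1 [h2 h3]]; split; first by do 2!split=> //; exact: X3_gt_neg1.
    by case=> _ [_]; rewrite ltNge h3.
  by move=> [[h1 [h2 _]] h3]; do 2!split=> //; rewrite leNgt; apply/negP=> h; exact: h3.
have mA := tail3_measurable a b (-1); have mB := tail3_measurable a b c.
rewrite measureD //; last by rewrite (le_lt_trans (probability_le1 P mA)) ?ltry.
rewrite setIidr; last by move=> w /= [h1 [h2 _]]; do 2!split=> //; exact: X3_gt_neg1.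
by rewrite fineB ?fin_num_measure // !fgm Fbar_neg1.
Qed.

Lemma shifted_event (C : set T) (x1 x2 : R) : 0 <= x1 -> 0 <= x2 ->
  [set w | x1 < X1 w - t /\ x2 < X2 w - t] `&` [set w | t < X1 w /\ t < X2 w /\ C w]
  = [set w | t + x1 < X1 w /\ t + x2 < X2 w /\ C w].
Proof.
move=> x1_ge0 x2_ge0; apply/seteqP; split=> w /=.
  by move=> [[h1 h2] [_ [_ Cw]]]; rewrite !ltrBrDl in h1 h2.
move=> [h1 [h2 Cw]]; rewrite !ltrBrDl; split=> //; split; last split=> //.
  by apply: le_lt_trans h1; rewrite lerDl.
by apply: le_lt_trans h2; rewrite lerDl.
Qed.

Lemma cond_surv_Bt (x1 x2 : R) : 0 < Fbar t -> 0 <= x1 -> 0 <= x2 ->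
  cond_surv2 P (fun w => X1 w - t) (fun w => X2 w - t)
    [set w | t < X1 w /\ t < X2 w] x1 x2
  = Dt (Fbar (t + x1) / Fbar t) (Fbar (t + x2) / Fbar t).
Proof.
move=> k_gt0 x1_ge0 x2_ge0; rewrite /cond_surv2 /condP tail2_as_tail3.
rewrite (shifted_event (fun w => -1 < X3 w)) // !fgm Fbar_neg1.
exact/FGM3_ratio_Dt/lt0r_neq0.
Qed.

Lemma cond_surv_Bs (x1 x2 : R) : -1 <= theta <= 1 -> 0 < Fbar t < 1 ->
  0 <= x1 -> 0 <= x2 ->
  cond_surv2 P (fun w => X1 w - t) (fun w => X2 w - t)
    [set w | t < X1 w /\ t < X2 w /\ t < X3 w] x1 x2
  = Dstart theta (Fbar t) (Fbar (t + x1) / Fbar t) (Fbar (t + x2) / Fbar t).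
Proof.
move=> th01 k01 x1_ge0 x2_ge0; rewrite /cond_surv2 /condP.
rewrite (shifted_event (fun w => t < X3 w)) // !fgm.
apply: FGM3_ratio_Dstart; first by case/andP: k01 => /lt0r_neq0.
exact/lt0r_neq0/Dstar_den_gt0.
Qed.

Lemma cond_surv_B3 (x1 x2 : R) : -1 <= theta <= 1 -> 0 < Fbar t < 1 ->
  0 <= x1 -> 0 <= x2 ->
  cond_surv2 P (fun w => X1 w - t) (fun w => X2 w - t)
    [set w | t < X1 w /\ t < X2 w /\ X3 w <= t] x1 x2
  = D3t theta (Fbar t) (Fbar (t + x1) / Fbar t) (Fbar (t + x2) / Fbar t).
Proof.
move=> th01 k01 x1_ge0 x2_ge0; rewrite /cond_surv2 /condP.
rewrite (shifted_event (fun w => X3 w <= t)) // !prob_X3_le.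
case/andP: (k01) => k_gt0 k_lt1.
apply: FGM3_ratio_D3t; first exact: lt0r_neq0.
  by rewrite subr_eq0 eq_sym lt_eqF.
exact/lt0r_neq0/D3_den_gt0.
Qed.

Lemma Fbar_ratio_01 (x : R) : 0 < Fbar t -> 0 <= x -> 0 <= Fbar (t + x) / Fbar t <= 1.
Proof.
move=> k_gt0 x_ge0; have /andP[F_ge0 _] := Fbar_bounds (t + x).
rewrite divr_ge0 ?(ltW k_gt0) //= ler_pdivrMr // mul1r.
by apply: Fbar_nonincr; rewrite lerDl.
Qed.

Lemma uo_le2_shifted (B C : set T) :
  B `<=` [set w | t < X1 w /\ t < X2 w] -> C `<=` [set w | t < X1 w /\ t < X2 w] ->
  (forall x1 x2, 0 <= x1 -> 0 <= x2 ->
     cond_surv2 P (fun w => X1 w - t) (fun w => X2 w - t) B x1 x2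
     <= cond_surv2 P (fun w => X1 w - t) (fun w => X2 w - t) C x1 x2) ->
  uo_le2 P (fun w => X1 w - t) (fun w => X2 w - t) B
           (fun w => X1 w - t) (fun w => X2 w - t) C.
Proof.
have above_t (D : set T) : D `<=` [set w | t < X1 w /\ t < X2 w] ->
    forall w, D w -> 0 < X1 w - t /\ 0 < X2 w - t.
  by move=> subD w /subD [h1 h2]; rewrite !subr_gt0.
by move=> /above_t BY /above_t CY; apply: uo_le2_of_nonneg.
Qed.
End FGMModel.

Theorem mainTheorem12 (d : measure_display) (T : measurableType d) (R : realType)
  (P : probability T R) (X1 X2 X3 : {RV P >-> R}) (Fbar : R -> R)
  (theta t : R) :
  (forall w, 0 <= X1 w) -> (forall w, 0 <= X2 w) -> (forall w, 0 <= X3 w) ->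
  (forall x, fine (P [set w | x < X1 w]) = Fbar x) ->
  (forall x, fine (P [set w | x < X2 w]) = Fbar x) ->
  (forall x, fine (P [set w | x < X3 w]) = Fbar x) ->
  -1 <= theta <= 1 ->
  (forall x1 x2 x3,
     fine (P [set w | x1 < X1 w /\ x2 < X2 w /\ x3 < X3 w])
     = FGM3 theta (Fbar x1) (Fbar x2) (Fbar x3)) ->
  0 < t -> 0 < Fbar t < 1 ->
  let k := Fbar t in
  let Fbt := fun x => Fbar (t + x) / Fbar t in
  let Y1 := fun w => X1 w - t in
  let Y2 := fun w => X2 w - t in
  let Bt := [set w | t < X1 w /\ t < X2 w] in
  let B3 := [set w | t < X1 w /\ t < X2 w /\ X3 w <= t] in
  let Bs := [set w | t < X1 w /\ t < X2 w /\ t < X3 w] in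
  (forall x1 x2, 0 <= x1 -> 0 <= x2 ->
     cond_surv2 P Y1 Y2 Bt x1 x2 = Dt (Fbt x1) (Fbt x2)) /\
  (forall x1 x2, 0 <= x1 -> 0 <= x2 ->
     cond_surv2 P Y1 Y2 B3 x1 x2 = D3t theta k (Fbt x1) (Fbt x2)) /\
  (forall x1 x2, 0 <= x1 -> 0 <= x2 ->
     cond_surv2 P Y1 Y2 Bs x1 x2 = Dstart theta k (Fbt x1) (Fbt x2)) /\
  (theta <= 0 ->
     (forall u1 u2, 0 <= u1 <= 1 -> 0 <= u2 <= 1 ->
        Dstart theta k u1 u2 <= Dt u1 u2 /\ Dt u1 u2 <= D3t theta k u1 u2) /\
     uo_le2 P Y1 Y2 Bs Y1 Y2 Bt /\ uo_le2 P Y1 Y2 Bt Y1 Y2 B3) /\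
  (0 <= theta ->
     (forall u1 u2, 0 <= u1 <= 1 -> 0 <= u2 <= 1 ->
        Dt u1 u2 <= Dstart theta k u1 u2 /\ D3t theta k u1 u2 <= Dt u1 u2) /\
     uo_le2 P Y1 Y2 Bt Y1 Y2 Bs /\ uo_le2 P Y1 Y2 B3 Y1 Y2 Bt).
Proof.
move=> _ _ X3_ge0 surv1 _ surv3 th01 fgm _ k01 k Fbt Y1 Y2 Bt B3 Bs.
have k_gt0 : 0 < Fbar t by case/andP: k01.
have survT x1 x2 := cond_surv_Bt X3_ge0 surv3 fgm (x1:=x1) (x2:=x2) k_gt0.
have survS x1 x2 := cond_surv_Bs fgm (x1:=x1) (x2:=x2) th01 k01.
have surv3' x1 x2 := cond_surv_B3 X3_ge0 surv3 fgm (x1:=x1) (x2:=x2) th01 k01.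
have orders u1 u2 := distortion_orders (u1:=u1) (u2:=u2) th01 k01.
have Fbt01 x : 0 <= x -> 0 <= Fbt x <= 1 := Fbar_ratio_01 surv1 k_gt0.
have orders_at x1 x2 (x1_ge0 : 0 <= x1) (x2_ge0 : 0 <= x2) :=
  orders _ _ (Fbt01 _ x1_ge0) (Fbt01 _ x2_ge0).
have BsT : Bs `<=` Bt by move=> w [? [? _]].
have B3T : B3 `<=` Bt by move=> w [? [? _]].
do 3!split=> //.
split=> [th_le0 | th_ge0]; (split; [move=> u1 u2 hu1 hu2 | split]).
- exact: (orders u1 u2 hu1 hu2).1 th_le0.
- apply: uo_le2_shifted => // x1 x2 h1 h2; rewrite survS // survT //.
  exact: ((orders_at _ _ h1 h2).1 th_le0).1.
- apply: uo_le2_shifted => // x1 x2 h1 h2; rewrite survT // surv3' //.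
  exact: ((orders_at _ _ h1 h2).1 th_le0).2.
- exact: (orders u1 u2 hu1 hu2).2 th_ge0.
- apply: uo_le2_shifted => // x1 x2 h1 h2; rewrite survT // survS //.
  exact: ((orders_at _ _ h1 h2).2 th_ge0).1.
- apply: uo_le2_shifted => // x1 x2 h1 h2; rewrite surv3' // survT //.
  exact: ((orders_at _ _ h1 h2).2 th_ge0).2.
Qed.
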